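(* Let $d\ge3$, $\alpha<2$ and $1<q\le\frac{d-\alpha}{d-2}$. Then there is no positive function $u$ on $\mathbb Z^d$ satisfying $\Delta u(x)+(1+|x|)^{-\alpha}u(x)^q\le0$ for all $x\in\mathbb Z^d$.
   Context: $\mathbb Z^d$ is the lattice graph with $\mu_{xy}=1$ if $\|x-y\|_1=1$ and $\mu_{xy}=0$ otherwise, so $\mu(x)=2d$ and $\Delta u(x)=\frac1{2d}\sum_{y:\|y-x\|_1=1}(u(y)-u(x))$. $|x|$ is the Euclidean norm. *)

From HB Require Import structures.
From mathcomp Require Import all_boot all_order all_algebra.
From mathcomp Require Import all_classical all_reals all_analysis.
Set Implicit Arguments. Unset Strict Implicit. Unset Printing Implicit Defensive.
Import Order.TTheory GRing.Theory Num.Theory.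
Local Open Scope ring_scope.

(* Points of Z^d are integer row vectors 'rV[int]_d.
   The lattice neighbours y of x (||y - x||_1 = 1) are exactly x +/- e_i,
   e_i = delta_mx 0 i, so the normalized Laplacian (mu(x) = 2d) is *)
Definition lattice_laplacian (R : realType) (d : nat)
  (u : 'rV[int]_d -> R) (x : 'rV[int]_d) : R :=
  (2 * d)%:R^-1 *
    \sum_(i < d) ((u (x + delta_mx 0 i) - u x) + (u (x - delta_mx 0 i) - u x)).

Definition eucl_norm (R : realType) (d : nat) (x : 'rV[int]_d) : R :=
  Num.sqrt (\sum_(i < d) ((x 0 i)%:~R : R) ^+ 2).

(* Test the inequality against the cutoff phi_K(x) = prod_i c(x_i), where c equals 1 on
   [-K, K], vanishes outside (-3K, 3K) and is piecewise quadratic in between, so that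
   -Delta phi_K <= 0 on the cube of side K - 1 and -Delta phi_K <= phi_K / K^2 on the rest.
   With f = (1 + |x|)^(-alpha) u^q, summation by parts and Young's inequality
   u K^(-2) <= delta (1 + |x|)^(-alpha) u^q + delta^(-s) (1 + |x|)^(alpha s) K^(-2 (s + 1)),
   s = 1 / (q - 1), give
     sum f phi_K <= delta sum_{annulus} f phi_K + C delta^(-s) K^(d - 2 - (2 - alpha) s),
   and the exponent of K is nonpositive exactly when q <= (d - alpha) / (d - 2).
   For delta = 1/2 this bounds sum f over Z^d; for delta small it bounds the annulus sums
   from below by a multiple of f(0). Since the annuli of the radii K_(j+1) = 3 K_j + 1 are
   disjoint, sum f over Z^d would then be infinite. *)

From HB Require Import structures.
From mathcomp Require Import all_boot all_order all_algebra.
From mathcomp Require Import all_classical all_reals all_analysis.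
From mathcomp Require Import zify ring lra.
Import Order.TTheory GRing.Theory Num.Theory.
Local Open Scope ring_scope.
Set Implicit Arguments. Unset Strict Implicit. Unset Printing Implicit Defensive.

Lemma big_uniq_support (R : nmodType) (T : eqType) (s t : seq T) (F : T -> R) :
  uniq s -> uniq t -> (forall x, F x != 0 -> (x \in s) = (x \in t)) ->
  \sum_(x <- s) F x = \sum_(x <- t) F x.
Proof.
move=> s_uniq t_uniq same_supp.
have drop0 r : \sum_(x <- r) F x = \sum_(x <- r | F x != 0) F x.
  by rewrite (bigID (fun x => F x == 0)) /= big1 ?add0r // => x /eqP.
rewrite drop0 [RHS]drop0 -big_filter -[RHS]big_filter.
apply/perm_big/uniq_perm; rewrite ?filter_uniq // => x.
by rewrite !mem_filter; case: (boolP (F x == 0)) => //= /same_supp ->.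
Qed.

Section LatticeCube.
Variable d : nat.
Implicit Types (M N : nat) (x : 'rV[int]_d).

Definition cube N : seq 'rV[int]_d :=
  [seq \row_i ((c i : nat)%:Z - N%:Z) | c : {ffun 'I_d -> 'I_(N.*2.+1)} <- enum predT].

Lemma size_cube N : size (cube N) = (N.*2.+1 ^ d)%N.
Proof. by rewrite size_map -cardE card_ffun !card_ord. Qed.

Lemma cube_uniq N : uniq (cube N).
Proof.
rewrite map_inj_uniq ?enum_uniq // => c c' /matrixP eq_cc'.
by apply/ffunP => i; apply/val_inj; have := eq_cc' 0 i; rewrite !mxE => /addIr [].
Qed.

Lemma mem_cube N x : (x \in cube N) = [forall i, `|x 0 i| <= N%:Z].
Proof.
apply/mapP/forallP => [[c _ ->] i|x_small].
  rewrite mxE; have := ltn_ord (c i); move: (nat_of_ord (c i)) => n; lia.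
have coord_lt (i : 'I_d) : (absz (x 0 i + N%:Z)%R < N.*2.+1)%N by have := x_small i; lia.
exists [ffun i => Ordinal (coord_lt i)]; first by rewrite mem_enum.
apply/matrixP => i j; rewrite ord1 mxE ffunE /=; have := x_small j; lia.
Qed.

Lemma cube_mono M N : (M <= N)%N -> {subset cube M <= cube N}.
Proof.
move=> le_MN x; rewrite !mem_cube => /forallP x_small.
by apply/forallP => i; have := x_small i; lia.
Qed.

Lemma mem_cube0 N : 0 \in cube N.
Proof. by rewrite mem_cube; apply/forallP => i; rewrite mxE normr0. Qed.

Lemma cube_shift N x i : x \in cube N ->
  (x + delta_mx 0 i \in cube N.+1) && (x - delta_mx 0 i \in cube N.+1).
Proof.
rewrite !mem_cube => /forallP x_small; apply/andP; split; apply/forallP => j;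
  rewrite !mxE eqxx /=; have := x_small j; case: (j == i); lia.
Qed.

Lemma big_cube_restrict (R : ringType) M N (g : 'rV[int]_d -> R) : (N <= M)%N ->
  \sum_(x <- cube M) (if x \in cube N then g x else 0) = \sum_(x <- cube N) g x.
Proof.
move=> le_NM; rewrite [RHS](eq_big_seq (fun x => if x \in cube N then g x else 0)).
  apply: big_uniq_support; rewrite ?cube_uniq // => x.
  by case: ifP => [x_in _|_]; rewrite ?eqxx // (cube_mono le_NM x_in).
by move=> x ->.
Qed.

Lemma big_cube_translate (R : comRingType) M (f g : 'rV[int]_d -> R) e :
  (forall x, f x != 0 -> x \in cube M) -> {in cube M, forall x, x + e \in cube M.+1} ->
  \sum_(x <- cube M.+1) f x * g (x + e) = \sum_(x <- cube M.+1) f (x - e) * g x.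
Proof.
move=> f_supp e_shift; pose F y := f (y - e) * g y.
transitivity (\sum_(x <- cube M.+1) F (x + e)).
  by apply: eq_bigr => x _; rewrite /F addrK.
rewrite -(big_map (+%R^~ e) xpredT F); apply: big_uniq_support.
- by rewrite map_inj_uniq ?cube_uniq //; apply: addIr.
- exact: cube_uniq.
move=> y; rewrite /F; case: (eqVneq (f (y - e)) 0) => [-> | /f_supp y_e _].
  by rewrite mul0r eqxx.
have y_in := e_shift _ y_e; rewrite subrK in y_in.
by rewrite y_in; apply/mapP; exists (y - e); rewrite ?subrK ?(cube_mono _ y_e).
Qed.
End LatticeCube.

Lemma sum_mul_laplacianC (R : realType) d M (f u : 'rV[int]_d -> R) :
  (forall x, f x != 0 -> x \in cube d M) ->
  \sum_(x <- cube d M.+1) f x * lattice_laplacian u x =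
  \sum_(x <- cube d M.+1) u x * lattice_laplacian f x.
Proof.
move=> f_supp; rewrite /lattice_laplacian.
under eq_bigr do rewrite mulrCA mulr_sumr.
under [RHS]eq_bigr do rewrite mulrCA mulr_sumr.
rewrite -!mulr_sumr exchange_big [in RHS]exchange_big; congr (_ * _).
apply: eq_bigr => i _ /=; set e := delta_mx 0 i.
have shiftD : {in cube d M, forall x, x + e \in cube d M.+1}.
  by move=> x /(cube_shift i) /andP[].
have shiftB : {in cube d M, forall x, x + - e \in cube d M.+1}.
  by move=> x /(cube_shift i) /andP[].
have expandL x : f x * (u (x + e) - u x + (u (x - e) - u x)) =
    f x * u (x + e) + f x * u (x - e) - 2 * (f x * u x) by ring.
have expandR x : u x * (f (x + e) - f x + (f (x - e) - f x)) =
    f (x - - e) * u x + f (x - e) * u x - 2 * (f x * u x) by rewrite opprK; ring.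
under eq_bigr do rewrite expandL.
under [RHS]eq_bigr do rewrite expandR.
rewrite !sumrB !big_split /= !big_cube_translate //; ring.
Qed.

Section Ramp.
Variable R : realType.
Variable K : nat.
Hypothesis K_gt0 : (0 < K)%N.
Local Notation k := (K%:R : R).

(* The quadratic tail on [K, 2K] makes the second difference of [ramp] at most
   [2 ramp m / K^2], a bound relative to the value itself. *)
Definition ramp (m : int) : R :=
  if m <= 0 then 1
  else if m <= K%:Z then 1 - m%:~R ^+ 2 / (2 * k ^+ 2)
  else if m <= (K.*2)%:Z then (2 * k - m%:~R) ^+ 2 / (2 * k ^+ 2)
  else 0.

Let k_gt0 : 0 < k. Proof. by rewrite ltr0n. Qed.
Let k_neq0 : k != 0. Proof. by rewrite gt_eqF. Qed.
Let KE : (K%:Z%:~R : R) = k. Proof. by []. Qed.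
Let K2E : ((K.*2)%:Z%:~R : R) = 2 * k.
Proof. by change ((K.*2)%:R = 2 * k :> R); rewrite -muln2 natrM mulrC. Qed.

Lemma ramp_le0 m : m <= 0 -> ramp m = 1.
Proof. by rewrite /ramp => ->. Qed.

Lemma ramp_inner m : 0 <= m <= K%:Z -> ramp m = 1 - m%:~R ^+ 2 / (2 * k ^+ 2).
Proof.
case/andP=> m_ge0 m_leK; rewrite /ramp m_leK; case: ifP => // m_le0.
have -> : m = 0 by lia.
by rewrite expr2 !mul0r subr0.
Qed.

Lemma ramp_outer m : K%:Z <= m <= (K.*2)%:Z ->
  ramp m = (2 * k - m%:~R) ^+ 2 / (2 * k ^+ 2).
Proof.
case/andP=> m_geK m_le2K; rewrite /ramp m_le2K ifF; last by lia.
case: ifP => // m_leK; have -> : m = K%:Z by lia.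
by rewrite pmulrn; field.
Qed.

Lemma ramp_far m : (K.*2)%:Z <= m -> ramp m = 0.
Proof.
move=> m_ge2K; rewrite /ramp (@ifF _ (m <= 0)) ?(@ifF _ (m <= K%:Z)); try lia.
case: ifP => // m_le2K; have -> : m = (K.*2)%:Z by lia.
by rewrite K2E subrr expr0n mul0r.
Qed.

Lemma ramp_ge_half m : m <= K%:Z -> 1 / 2 <= ramp m.
Proof.
move=> m_leK; have [m_le0|m_gt0] := lerP m 0; first by rewrite ramp_le0 //; lra.
rewrite ramp_inner; last by lia.
have t_ge0 : 0 <= m%:~R :> R by rewrite ler0z; lia.
have t_leK : m%:~R <= k by rewrite -KE ler_int.
suff : m%:~R ^+ 2 / (2 * k ^+ 2) <= 1 / 2 by lra.
by rewrite ler_pdivrMr ?mulr_gt0 ?exprn_gt0 //; nra.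
Qed.

Lemma ramp_ge0 m : 0 <= ramp m.
Proof.
have [m_leK|m_gtK] := lerP m K%:Z; first by apply: le_trans (ramp_ge_half m_leK); lra.
have [m_le2K|m_gt2K] := lerP m (K.*2)%:Z; last by rewrite ramp_far //; lia.
by rewrite ramp_outer; [rewrite divr_ge0 ?sqr_ge0 ?mulr_ge0 ?sqr_ge0 | lia].
Qed.

Lemma ramp_le1 m : ramp m <= 1.
Proof.
have [m_le0|m_gt0] := lerP m 0; first by rewrite ramp_le0.
have [m_leK|m_gtK] := lerP m K%:Z.
  by rewrite ramp_inner; [rewrite gerBl divr_ge0 ?sqr_ge0 ?mulr_ge0 ?sqr_ge0 | lia].
have [m_le2K|m_gt2K] := lerP m (K.*2)%:Z; last by rewrite ramp_far //; lia.
rewrite ramp_outer; last by lia.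
have t_geK : k <= m%:~R by rewrite -KE ler_int; lia.
have t_le2K : m%:~R <= 2 * k by rewrite -K2E ler_int.
by rewrite ler_pdivrMr ?mulr_gt0 ?exprn_gt0 //; nra.
Qed.

Lemma ramp_diff2_neg m : m <= -1 -> 2 * ramp m - ramp (m + 1) - ramp (m - 1) = 0.
Proof. by move=> m_neg; rewrite !ramp_le0; try lia; lra. Qed.

Lemma ramp_diff2_inner m : 0 <= m < K%:Z ->
  2 * ramp m - ramp (m + 1) - ramp (m - 1) <= 1 / k ^+ 2.
Proof.
case/andP=> m_ge0 m_ltK.
have lower : 1 - (m%:~R - 1) ^+ 2 / (2 * k ^+ 2) <= ramp (m - 1).
  have [m1_le0|m1_gt0] := lerP (m - 1) 0.
    by rewrite ramp_le0 // gerBl divr_ge0 ?sqr_ge0 ?mulr_ge0 ?sqr_ge0.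
  by rewrite ramp_inner ?intrB //; lia.
rewrite (ramp_inner (m := m)) ?(ramp_inner (m := m + 1)) ?intrD; try lia.
have E : 2 * (1 - m%:~R ^+ 2 / (2 * k ^+ 2)) - (1 - (m%:~R + 1) ^+ 2 / (2 * k ^+ 2))
    - (1 - (m%:~R - 1) ^+ 2 / (2 * k ^+ 2)) = 1 / k ^+ 2 :> R by field.
lra.
Qed.

Lemma ramp_diff2_outer m : K%:Z <= m -> 2 * ramp m - ramp (m + 1) - ramp (m - 1) <= 0.
Proof.
move=> m_geK; have [->|m_neK] := eqVneq m K%:Z.
  rewrite (ramp_inner (m := K%:Z - 1)) ?ramp_outer ?intrB ?intrD ?KE; try lia.
  suff -> : 2 * ((2 * k - k) ^+ 2 / (2 * k ^+ 2)) - (2 * k - (k + 1)) ^+ 2 / (2 * k ^+ 2)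
    - (1 - (k - 1) ^+ 2 / (2 * k ^+ 2)) = 0 by [].
  by field.
have [m_lt2K|m_ge2K] := ltrP m (K.*2)%:Z.
  rewrite !ramp_outer ?intrB ?intrD; try lia.
  suff -> : 2 * ((2 * k - m%:~R) ^+ 2 / (2 * k ^+ 2))
      - (2 * k - (m%:~R + 1)) ^+ 2 / (2 * k ^+ 2)
      - (2 * k - (m%:~R - 1)) ^+ 2 / (2 * k ^+ 2) = - (1 / k ^+ 2).
    by rewrite oppr_le0 divr_ge0 ?exprn_ge0 ?(ltW k_gt0).
  by field.
by rewrite ramp_far //; have := ramp_ge0 (m + 1); have := ramp_ge0 (m - 1); lra.
Qed.

Lemma ramp_diff2 m : 0 <= m ->
  2 * ramp m - ramp (m + 1) - ramp (m - 1) <= 2 * ramp m / k ^+ 2.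
Proof.
move=> m_ge0; have [m_ltK|m_geK] := ltrP m K%:Z.
  apply: le_trans (ramp_diff2_inner _) _; first by lia.
  apply: ler_wpM2r; first by rewrite invr_ge0 exprn_ge0 ?(ltW k_gt0).
  by have := ramp_ge_half (ltW m_ltK); lra.
apply: le_trans (ramp_diff2_outer m_geK) _.
by rewrite !mulr_ge0 ?ramp_ge0 ?invr_ge0 ?exprn_ge0 ?(ltW k_gt0).
Qed.

End Ramp.

Section TestFunction.
Variable R : realType.
Variables d K : nat.
Hypothesis K_gt0 : (0 < K)%N.
Local Notation k := (K%:R : R).
Implicit Types (x y : 'rV[int]_d) (i j : 'I_d).

Definition cutoff (n : int) : R := ramp R K (`|n| - K%:Z)%R.

Lemma cutoff_ge0 n : 0 <= cutoff n. Proof. exact: ramp_ge0. Qed.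
Lemma cutoff_le1 n : cutoff n <= 1. Proof. exact: ramp_le1. Qed.

Lemma cutoff_small n : `|n| <= K%:Z -> cutoff n = 1.
Proof. by move=> n_small; rewrite /cutoff ramp_le0 //; lia. Qed.

Lemma cutoff_far n : (3 * K)%:Z <= `|n| -> cutoff n = 0.
Proof. by move=> n_large; rewrite /cutoff ramp_far //; lia. Qed.

Lemma cutoff_diff2 n : 2 * cutoff n - cutoff (n + 1) - cutoff (n - 1) <=
  (if K%:Z <= `|n| then 2 * cutoff n / k ^+ 2 else 0).
Proof.
have [->|n_neq0] := eqVneq n 0.
  by rewrite ifF /cutoff ?ramp_le0 //=; try lia; lra.
have shifts : cutoff (n + 1) + cutoff (n - 1) =
    ramp R K (`|n| - K%:Z + 1)%R + ramp R K (`|n| - K%:Z - 1)%R.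
  rewrite /cutoff; have [n_gt0|n_lt0] := ltrP 0 n; [|rewrite addrC];
    by congr (ramp R K _ + ramp R K _); lia.
rewrite -addrA -opprD shifts opprD addrA /cutoff.
by case: ifP => n_geK; [apply: ramp_diff2 | rewrite ramp_diff2_neg]; try lia.
Qed.

Definition test_fun (x : 'rV[int]_d) : R := \prod_(i < d) cutoff (x 0 i).

Lemma test_fun_ge0 x : 0 <= test_fun x.
Proof. by apply: prodr_ge0 => i _; apply: cutoff_ge0. Qed.

Lemma test_fun_le1 x : test_fun x <= 1.
Proof. by apply: prodr_ile1 => i _; rewrite cutoff_ge0 cutoff_le1. Qed.

Lemma test_fun_cube x : x \in cube d K -> test_fun x = 1.
Proof.
by rewrite mem_cube => /forallP x_small; apply: big1 => i _; apply: cutoff_small.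
Qed.

Lemma test_fun_support x : test_fun x != 0 -> x \in cube d (3 * K).-1.
Proof.
move=> fx_neq0; rewrite mem_cube; apply/forallP => i.
have : cutoff (x 0 i) != 0.
  by apply: contraNneq fx_neq0 => cx0; rewrite /test_fun (bigD1 i) //= cx0 mul0r.
by apply: contraR => x_large; rewrite cutoff_far //; lia.
Qed.

Lemma test_fun_split x y i : (forall j, j != i -> y 0 j = x 0 j) ->
  test_fun y = cutoff (y 0 i) * \prod_(j < d | j != i) cutoff (x 0 j).
Proof.
by move=> yx; rewrite /test_fun (bigD1 i) //=; congr (_ * _); apply: eq_bigr => j /yx ->.
Qed.

Lemma test_fun_diff2 x i :
  - (test_fun (x + delta_mx 0 i) - test_fun x + (test_fun (x - delta_mx 0 i) - test_fun x))
  <= (if x \in cube d K.-1 then 0 else 2 * test_fun x / k ^+ 2).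
Proof.
have coordD j : j != i -> (x + delta_mx 0 i) 0 j = x 0 j.
  by move=> ji; rewrite !mxE (negbTE ji) andbF addr0.
have coordB j : j != i -> (x - delta_mx 0 i) 0 j = x 0 j.
  by move=> ji; rewrite !mxE (negbTE ji) andbF oppr0 addr0.
rewrite (test_fun_split coordD) (test_fun_split coordB) (@test_fun_split x x i) //.
rewrite !mxE !eqxx /=; set P := \prod_(j < d | j != i) _.
have P_ge0 : 0 <= P by apply: prodr_ge0 => j _; apply: cutoff_ge0.
have -> : - (cutoff (x 0 i + 1) * P - cutoff (x 0 i) * P +
             (cutoff (x 0 i - 1) * P - cutoff (x 0 i) * P)) =
    P * (2 * cutoff (x 0 i) - cutoff (x 0 i + 1) - cutoff (x 0 i - 1)) by ring.
apply: le_trans (ler_wpM2l P_ge0 (cutoff_diff2 _)) _.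
case: ifP => [xi_large|_].
  rewrite ifF; last by rewrite mem_cube; apply/negP => /forallP/(_ i); lia.
  by lra.
rewrite mulr0; case: ifP => // _.
by rewrite !mulr_ge0 ?cutoff_ge0 ?invr_ge0 ?exprn_ge0.
Qed.

Lemma laplacian_test_fun x :
  - lattice_laplacian test_fun x <= (if x \in cube d K.-1 then 0 else test_fun x / k ^+ 2).
Proof.
rewrite /lattice_laplacian -mulrN -sumrN.
apply: le_trans (ler_wpM2l _ (ler_sum _ (fun i _ => test_fun_diff2 x i))) _.
  by rewrite invr_ge0 ler0n.
rewrite sumr_const card_ord; case: ifP => [_|/negbT]; first by rewrite mul0rn mulr0.
rewrite mem_cube negb_forall => /existsP[i _].
have d_neq0 : d%:R != 0 :> R by rewrite pnatr_eq0 -lt0n (leq_ltn_trans _ (ltn_ord i)).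
rewrite -mulr_natr natrM le_eqVlt; apply/orP; left; apply/eqP; field.
by rewrite d_neq0 pnatr_eq0 -lt0n K_gt0.
Qed.
End TestFunction.

Section PowerInequalities.
Variable R : realType.
Implicit Types a c q r x y U : R.

Lemma powR_nonpos_le r x y : r <= 0 -> 0 < x -> x <= y -> y `^ r <= x `^ r.
Proof.
move=> r_le0 x_gt0 le_xy; have y_gt0 := lt_le_trans x_gt0 le_xy.
have powRE z : z `^ r = (z `^ (- r))^-1 by rewrite -powRN opprK.
rewrite !powRE lef_pV2 ?posrE ?powR_gt0 //.
by apply: ge0_ler_powR; rewrite ?nnegrE ?oppr_ge0 //; apply: ltW.
Qed.

Lemma powR_nonpos_le1 x r : 1 <= x -> r <= 0 -> x `^ r <= 1.
Proof. by move=> x_ge1 r_le0; rewrite -(powRr0 x); apply: ler_powR. Qed.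

Lemma powR_invr a r : 0 < a -> a^-1 `^ r = a `^ (- r).
Proof. by move=> a_gt0; rewrite -(powR_inv1 (ltW a_gt0)) -powRrM mulN1r. Qed.

Lemma young_powR a c U q : 0 < a -> 0 < c -> 0 <= U -> 1 < q ->
  U * c <= a * U `^ q + a `^ (- (q - 1)^-1) * c `^ ((q - 1)^-1 + 1).
Proof.
move=> a_gt0 c_gt0 U_ge0 q_gt1; set s := (q - 1)^-1.
have q1_gt0 : 0 < q - 1 by rewrite subr_gt0.
set T := (c / a) `^ s.
have TcE : T * c = a `^ (- s) * c `^ (s + 1).
  rewrite /T (powRM _ (ltW c_gt0)) ?invr_ge0 ?(ltW a_gt0) // powR_invr //.
  rewrite powRD ?(gt_eqF c_gt0) ?implybT // (powRr1 (ltW c_gt0)); ring.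
rewrite -TcE; have [U_le_T|T_lt_U] := leP U T.
  rewrite -[X in X <= _]add0r; apply: lerD; last by rewrite ler_pM2r.
  by rewrite mulr_ge0 ?powR_ge0 ?(ltW a_gt0).
suff Uc_le : U * c <= a * U `^ q.
  by apply: (le_trans Uc_le); rewrite lerDl mulr_ge0 ?powR_ge0 ?(ltW c_gt0).
have TqE : T `^ (q - 1) = c / a.
  by rewrite /T -powRrM mulVf ?gt_eqF // powRr1 // divr_ge0 ?(ltW a_gt0) ?(ltW c_gt0).
have ca_le : c / a <= U `^ (q - 1).
  by rewrite -TqE ge0_ler_powR ?nnegrE ?powR_ge0 ?(ltW q1_gt0) ?(ltW T_lt_U).
rewrite -(mulr_powRB1 U_ge0 (lt_trans ltr01 q_gt1)) mulrCA ler_wpM2l //.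
by rewrite -ler_pdivrMl // mulrC.
Qed.

End PowerInequalities.

Section EuclideanNorm.
Variables (R : realType) (d : nat).
Implicit Types (x : 'rV[int]_d) (K N : nat).

Lemma coord_le_eucl_norm x i : `|(x 0 i)%:~R : R| <= eucl_norm R x.
Proof.
rewrite /eucl_norm -sqrtr_sqr; apply: ler_wsqrtr.
by rewrite (bigD1 i) //= lerDl; apply: sumr_ge0 => j _; apply: sqr_ge0.
Qed.

Lemma eucl_norm_ge K x : x \notin cube d K.-1 -> K%:R <= eucl_norm R x.
Proof.
rewrite mem_cube negb_forall => /existsP[i xi_large].
apply: le_trans (coord_le_eucl_norm x i).
by rewrite -intr_norm -[K%:R]/(K%:Z%:~R) ler_int; lia.
Qed.

Lemma eucl_norm_le N x : x \in cube d N -> eucl_norm R x <= d%:R * N%:R.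
Proof.
rewrite mem_cube => /forallP x_small.
rewrite /eucl_norm -[X in _ <= X]ger0_norm ?mulr_ge0 ?ler0n // -sqrtr_sqr.
apply: ler_wsqrtr; apply: (@le_trans _ _ (\sum_(j < d) (N%:R : R) ^+ 2)).
  apply: ler_sum => j _; rewrite -real_normK ?num_real // -intr_norm.
  rewrite lerXn2r ?nnegrE ?ler0z ?normr_ge0 ?ler0n //.
  by rewrite -[N%:R]/(N%:Z%:~R) ler_int.
have d_le_sqr : d%:R <= d%:R ^+ 2 :> R by rewrite -natrX ler_nat; nia.
have N_ge0 : 0 <= N%:R :> R by rewrite ler0n.
by rewrite sumr_const card_ord -mulr_natr; nra.
Qed.

Lemma annulus_weight_le K beta x : (0 < d)%N -> (0 < K)%N ->
  x \in cube d (3 * K) -> x \notin cube d K.-1 ->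
  (1 + eucl_norm R x) `^ beta <= ((4 * d)%:R `^ beta + 1) * K%:R `^ beta.
Proof.
move=> d_gt0 K_gt0 /eucl_norm_le norm_le /eucl_norm_ge norm_ge.
have K_ge1 : 1 <= K%:R :> R by rewrite ler1n.
have d_ge1 : 1 <= d%:R :> R by rewrite ler1n.
have norm_ge0 : 0 <= eucl_norm R x by apply: sqrtr_ge0.
have [beta_ge0|beta_lt0] := leP 0 beta.
  apply: (@le_trans _ _ (((4 * d)%:R * K%:R) `^ beta)).
    by apply: ge0_ler_powR; rewrite ?nnegrE ?natrM; nra.
  by rewrite powRM ?ler0n // ler_wpM2r ?powR_ge0 // lerDl.
apply: (@le_trans _ _ (K%:R `^ beta)); first by apply: powR_nonpos_le; lra.
by rewrite ler_peMl ?powR_ge0 // lerDr powR_ge0.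
Qed.

End EuclideanNorm.

Section Supersolution.
Variables (R : realType) (d : nat) (alpha q : R) (u : 'rV[int]_d -> R).
Hypothesis d_gt0 : (0 < d)%N.
Hypothesis q_gt1 : 1 < q.
Hypothesis u_gt0 : forall x, 0 < u x.
Hypothesis u_super : forall x,
  lattice_laplacian u x + (1 + eucl_norm R x) `^ (- alpha) * u x `^ q <= 0.
Implicit Types (x : 'rV[int]_d) (K N : nat) (delta : R).

Local Notation s := (q - 1)^-1.
Local Notation beta := (alpha * s).
Local Notation phi K := (test_fun R K).

Definition source x := (1 + eucl_norm R x) `^ (- alpha) * u x `^ q.
Definition mass N := \sum_(x <- cube d N) source x.
Definition tested K := \sum_(x <- cube d (3 * K)) source x * phi K x.
Definition annulus K :=
  \sum_(x <- cube d (3 * K) | x \notin cube d K.-1) source x * phi K x.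
Definition annulus_const := ((4 * d)%:R `^ beta + 1) * 7%:R ^+ d.
Definition scaling_exponent := d%:R - 2 - (2 - alpha) * s.

Lemma source_gt0 x : 0 < source x.
Proof. by rewrite mulr_gt0 ?powR_gt0 // ltr_wpDr ?sqrtr_ge0. Qed.

Lemma tested_le_pairing K : (0 < K)%N ->
  tested K <= \sum_(x <- cube d (3 * K)) u x * - lattice_laplacian (phi K) x.
Proof.
move=> K_gt0.
apply: (@le_trans _ _ (\sum_(x <- cube d (3 * K)) phi K x * - lattice_laplacian u x)).
  apply: ler_sum => x _; rewrite mulrC ler_wpM2l ?test_fun_ge0 //.
  by have := u_super x; rewrite /source; lra.
have cubeE : cube d (3 * K) = cube d (3 * K).-1.+1 by rewrite prednK // muln_gt0.
under eq_bigr do rewrite mulrN.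
under [X in _ <= X]eq_bigr do rewrite mulrN.
by rewrite !sumrN cubeE (sum_mul_laplacianC u (test_fun_support K_gt0)).
Qed.

Lemma annulus_term_le K delta x : (0 < K)%N -> 0 < delta ->
  x \in cube d (3 * K) -> x \notin cube d K.-1 ->
  u x * - lattice_laplacian (phi K) x <= delta * (source x * phi K x)
    + delta `^ (- s) * ((4 * d)%:R `^ beta + 1) * K%:R `^ (beta - 2 * (s + 1)).
Proof.
move=> K_gt0 delta_gt0 x_in x_out.
have k_gt0 : 0 < K%:R :> R by rewrite ltr0n.
set w := (1 + eucl_norm R x) `^ (- alpha).
have w_gt0 : 0 < w by rewrite powR_gt0 // ltr_wpDr ?sqrtr_ge0.
set c := K%:R `^ (-2) : R.
have c_gt0 : 0 < c by rewrite powR_gt0.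
set B := delta `^ (- s) * _ * _.
have B_ge0 : 0 <= B by rewrite !mulr_ge0 ?powR_ge0 ?addr_ge0.
have uc_le : u x * c <= delta * source x + B.
  have := young_powR (mulr_gt0 delta_gt0 w_gt0) c_gt0 (ltW (u_gt0 x)) q_gt1.
  rewrite (powRM _ (ltW delta_gt0) (ltW w_gt0)) /w /c -!powRrM mulrNN mulNr.
  rewrite -(mulrA delta) -/(source x) => young.
  apply: (le_trans young); rewrite lerD2l /B -!mulrA ler_wpM2l ?powR_ge0 //.
  rewrite powRD ?(gt_eqF k_gt0) ?implybT // mulrA ler_wpM2r ?powR_ge0 //.
  exact: annulus_weight_le.
have lapl : - lattice_laplacian (phi K) x <= phi K x * c.
  by have := laplacian_test_fun R K_gt0 x; rewrite (negbTE x_out) /c powR_invn ?ler0n.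
apply: (le_trans (ler_wpM2l (ltW (u_gt0 x)) lapl)).
rewrite mulrCA; apply: (le_trans (ler_wpM2l (test_fun_ge0 _ K_gt0 _) uc_le)).
rewrite mulrDr mulrCA (mulrC (phi K x)); apply: lerD => //.
by rewrite ler_piMl ?test_fun_le1.
Qed.

Lemma caccioppoli K delta : (0 < K)%N -> 0 < delta ->
  tested K <= delta * annulus K + delta `^ (- s) * annulus_const * K%:R `^ scaling_exponent.
Proof.
move=> K_gt0 delta_gt0; apply: (le_trans (tested_le_pairing K_gt0)).
have k_gt0 : 0 < K%:R :> R by rewrite ltr0n.
pose B := delta `^ (- s) * ((4 * d)%:R `^ beta + 1) * K%:R `^ (beta - 2 * (s + 1)).
have B_ge0 : 0 <= B by rewrite !mulr_ge0 ?powR_ge0 ?addr_ge0.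
rewrite (bigID (fun x => x \in cube d K.-1)) /=.
have inner : \sum_(x <- cube d (3 * K) | x \in cube d K.-1)
    u x * - lattice_laplacian (phi K) x <= 0.
  apply: sumr_le0 => x x_in; rewrite mulr_ge0_le0 ?(ltW (u_gt0 x)) //.
  by have := laplacian_test_fun R K_gt0 x; rewrite x_in.
have outer : \sum_(x <- cube d (3 * K) | x \notin cube d K.-1)
    u x * - lattice_laplacian (phi K) x
    <= delta * annulus K + B *+ size (cube d (3 * K)).
  apply: (@le_trans _ _ (\sum_(x <- cube d (3 * K) | x \notin cube d K.-1)
                            (delta * (source x * phi K x) + B))).
    rewrite big_seq_cond [X in _ <= X]big_seq_cond; apply: ler_sum => x /andP[x_in x_out].
    exact: annulus_term_le.
  rewrite big_split /= -mulr_sumr lerD2l.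
  apply: (@le_trans _ _ (\sum_(x <- cube d (3 * K)) B)).
    by rewrite [X in _ <= X](bigID (fun x => x \notin cube d K.-1)) /= lerDl sumr_ge0.
  by rewrite big_const_seq count_predT iter_addr_0.
apply: (le_trans (lerD inner outer)); rewrite add0r lerD2l size_cube -mulr_natr natrX.
have size_le : ((3 * K).*2.+1)%:R ^+ d <= 7%:R ^+ d * K%:R `^ d%:R :> R.
  rewrite powR_mulrn ?ler0n // -exprMn -natrM; apply: lerXn2r; rewrite ?nnegrE ?ler0n //.
  by rewrite ler_nat; lia.
apply: (le_trans (ler_wpM2l B_ge0 size_le)).
rewrite [X in _ <= X](_ : _ = B * (7%:R ^+ d * K%:R `^ d%:R)) //.
rewrite /B /annulus_const /scaling_exponent (_ : d%:R - 2 - (2 - alpha) * s =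
  (beta - 2 * (s + 1)) + d%:R); last by ring.
by rewrite powRD ?(gt_eqF k_gt0) ?implybT //; ring.
Qed.

Let term_ge0 K x : (0 < K)%N -> 0 <= source x * phi K x.
Proof. by move=> K_gt0; rewrite mulr_ge0 ?test_fun_ge0 ?(ltW (source_gt0 x)). Qed.

Lemma annulus_le_tested K : (0 < K)%N -> annulus K <= tested K.
Proof.
move=> K_gt0; rewrite /tested (bigID (fun x => x \notin cube d K.-1)) /= lerDl.
by apply: sumr_ge0 => x _; apply: term_ge0.
Qed.

Lemma mass_le_tested K : (0 < K)%N -> mass K <= tested K.
Proof.
move=> K_gt0; rewrite /mass -(big_cube_restrict _ (leq_pmull K (isT : 0 < 3)%N)).
apply: ler_sum => x _; case: ifP => [x_in|_]; last exact: term_ge0.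
by rewrite test_fun_cube ?mulr1.
Qed.

Lemma annulus_le_mass K : (0 < K)%N -> annulus K <= mass (3 * K) - mass K.-1.
Proof.
move=> K_gt0; rewrite /mass -(big_cube_restrict _ (_ : K.-1 <= 3 * K)%N); last by lia.
rewrite -sumrB /annulus big_mkcond /=; apply: ler_sum => x _.
case: (boolP (x \in cube d K.-1)) => /= _; first by rewrite subrr.
by rewrite subr0 ler_piMr ?(ltW (source_gt0 x)) ?test_fun_le1.
Qed.

Lemma mass_mono : {homo mass : M N / (M <= N)%N >-> M <= N}.
Proof.
move=> M N le_MN; rewrite /mass -(big_cube_restrict _ le_MN).
by apply: ler_sum => x _; case: ifP => // _; apply: ltW (source_gt0 x).
Qed.

Lemma source0_le_tested K : (0 < K)%N -> source 0 <= tested K.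
Proof.
move=> K_gt0; rewrite /tested (bigD1_seq 0) ?mem_cube0 ?cube_uniq //=.
rewrite test_fun_cube ?mem_cube0 // mulr1 lerDl.
by apply: sumr_ge0 => x _; apply: term_ge0.
Qed.

Hypothesis exponent_le0 : scaling_exponent <= 0.

Let scaled_const_le delta K : (0 < K)%N ->
  delta `^ (- s) * annulus_const * K%:R `^ scaling_exponent
  <= delta `^ (- s) * annulus_const.
Proof.
move=> K_gt0; rewrite ler_piMr ?mulr_ge0 ?powR_ge0 ?addr_ge0 ?exprn_ge0 //.
by apply: powR_nonpos_le1; rewrite ?ler1n.
Qed.

Lemma mass_bounded : exists C, forall N, mass N <= C.
Proof.
exists (2 * ((2^-1) `^ (- s) * annulus_const)) => N.
have N1_gt0 : (0 < N.+1)%N by [].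
have half_gt0 : 0 < 2^-1 :> R by rewrite invr_gt0.
apply: (le_trans (mass_mono (leqnSn N))); apply: (le_trans (mass_le_tested N1_gt0)).
have := caccioppoli N1_gt0 half_gt0; have := annulus_le_tested N1_gt0.
have := scaled_const_le (2^-1) N1_gt0; lra.
Qed.

Lemma annulus_bounded_below :
  exists2 eta, 0 < eta & forall K, (0 < K)%N -> eta <= annulus K.
Proof.
have f0_gt0 := source_gt0 0.
have C_gt0 : 0 < annulus_const by rewrite mulr_gt0 ?exprn_gt0 ?ltr0n ?ltr_wpDl ?powR_ge0.
pose delta := (2 * annulus_const / source 0) `^ (q - 1).
have delta_gt0 : 0 < delta by rewrite powR_gt0 // !mulr_gt0 ?invr_gt0.
have deltaE : delta `^ (- s) = source 0 / (2 * annulus_const).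
  rewrite -powRrM mulrN mulfV ?gt_eqF ?subr_gt0 // powR_inv1 ?invf_div //.
  by rewrite divr_ge0 ?(ltW f0_gt0) // mulr_ge0 ?(ltW C_gt0).
exists (source 0 / (2 * delta)); first by rewrite divr_gt0 // mulr_gt0.
move=> K K_gt0; rewrite ler_pdivrMr ?mulr_gt0 //.
have := caccioppoli K_gt0 delta_gt0; have := source0_le_tested K_gt0.
have := scaled_const_le delta K_gt0; rewrite deltaE.
have -> : source 0 / (2 * annulus_const) * annulus_const = source 0 / 2.
  by field; rewrite gt_eqF.
lra.
Qed.

Lemma mass_unbounded C : exists N, C < mass N.
Proof.
have [eta eta_gt0 annulus_ge] := annulus_bounded_below.
pose radius j := iter j (fun K => (3 * K).+1) 1%N.
have radius_gt0 j : (0 < radius j)%N by case: j.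
have mass_ge j : eta *+ j <= mass (radius j).-1.
  elim: j => [|j IHj].
    by rewrite mulr0n; apply: sumr_ge0 => x _; apply: ltW (source_gt0 x).
  have -> : (radius j.+1).-1 = 3 * radius j by [].
  have := annulus_le_mass (radius_gt0 j); have := annulus_ge _ (radius_gt0 j).
  by rewrite mulrS; lra.
have Ceta_ge0 : 0 <= `|C| / eta := divr_ge0 (normr_ge0 C) (ltW eta_gt0).
have := archi_boundP Ceta_ge0; set n := Num.Def.archi_bound _.
rewrite ltr_pdivrMr // => lt_n; exists (radius n).-1.
apply: (lt_le_trans _ (mass_ge n)); rewrite -mulr_natr mulrC.
by have := ler_norm C; lra.
Qed.

End Supersolution.

Lemma no_positive_supersolution (R : realType) (d : nat) (alpha q : R)
    (u : 'rV[int]_d -> R) :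
  (0 < d)%N -> 1 < q -> (forall x, 0 < u x) ->
  (forall x, lattice_laplacian u x + (1 + eucl_norm R x) `^ (- alpha) * u x `^ q <= 0) ->
  scaling_exponent d alpha q <= 0 -> False.
Proof.
move=> d_gt0 q_gt1 u_gt0 u_super exponent_le0.
have [C mass_le] := mass_bounded d_gt0 q_gt1 u_gt0 u_super exponent_le0.
have [N] := mass_unbounded d_gt0 q_gt1 u_gt0 u_super exponent_le0 C.
by rewrite ltNge mass_le.
Qed.

Unset Implicit Arguments.
Theorem theorem7p4 (R : realType) (d : nat) (alpha q : R) :
  (3 <= d)%N -> alpha < 2 -> 1 < q -> q <= (d%:R - alpha) / (d%:R - 2) ->
  ~ exists u : 'rV[int]_d -> R,
      (forall x, 0 < u x) /\
      (forall x, lattice_laplacian u x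
                 + (1 + eucl_norm R x) `^ (- alpha) * (u x) `^ q <= 0).
Proof.
move=> d_ge3 _ q_gt1 q_le [u [u_gt0 u_super]].
apply: (no_positive_supersolution _ q_gt1 u_gt0 u_super); first exact: leq_trans d_ge3.
have d_ge3R : 3 <= d%:R :> R by rewrite (ler_nat R 3).
rewrite ler_pdivlMr ?subr_gt0 in q_le; last by lra.
rewrite /scaling_exponent subr_le0 ler_pdivlMr ?subr_gt0 //; nra.
Qed.
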